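(* Let $\lambda>0$, let $K\ge1$ be an integer, and let $1+\frac{1}{1+2K}\le\bar E^{max}\le2$. Set $\pi_0^*=\bar E^{max}-1$ and $k^*=\lfloor(\frac{1}{\pi_0^*}-1)/2\rfloor$. Assume $k^*+1\le K$ and $\rho^*_{k^*+1}:=\frac{1}{\pi_0^*}-1-2k^*>0$. Define the rates $$\lambda_k^*=\begin{cases}2\lambda & k=0,\\ \lambda & 1\le k\le k^*,\\ 0 & k^*+1\le k\le K,\end{cases}\qquad \mu_k^*=\begin{cases}\lambda & k\ne k^*+1,\\ \dfrac{2\lambda}{\rho^*_{k^*+1}} & k=k^*+1.\end{cases}$$ Equivalently, define the ENC parameters $$g_k^*=\begin{cases}0 & k\le k^*,\\ 1 & k^*+1\le k\le K,\end{cases}\qquad f_k^*=\begin{cases}\dfrac{2\lambda}{\rho^*_{k^*+1}}-\lambda & k=k^*+1,\\ 0 & k\ne k^*+1.\end{cases}$$ Then these rates are feasible for Problem 1 (in particular $\mu_k^*\ge\lambda$ and $\lambda_K^*=0$), the resulting stationary distribution satisfies $\pi_0=\pi_0^*$, and the average delay $$D=\frac{1}{2\lambda}\sum_k k\pi_k$$ equals the optimal value $$\frac{k^*+1}{2\lambda}\bigl[1-(\bar E^{max}-1)(k^*+1)\bigr].$$ Hence these parameters are optimal for Problem 1.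
   Context: ENC parameters are $g_0,\dots,g_K\in[0,1]$ and $f_1,\dots,f_K\ge0$. They determine the rates $$\lambda_0=2\lambda(1-g_0),\qquad \lambda_k=\lambda(1-g_k)\ (1\le k\le K),\qquad \mu_k=\lambda+f_k\ (1\le k\le K).$$ The buffer is the birth–death chain on $\{0,\dots,K\}$ with birth rates $\lambda_k$ and death rates $\mu_k$. Its stationary distribution is $$\pi_k=\pi_0\prod_{m=0}^{k-1}\frac{\lambda_m}{\mu_{m+1}},\qquad \pi_0=\Bigl[1+\sum_{k=1}^{K}\prod_{m=0}^{k-1}\frac{\lambda_m}{\mu_{m+1}}\Bigr]^{-1}.$$ Problem 1 is the following: minimize $D=\frac{1}{2\lambda}\sum_{k=0}^K k\pi_k$ over rates satisfying $0\le\lambda_0\le2\lambda$, $0\le\lambda_k\le\lambda$ for $1\le k\le K-1$, $\lambda_K=0$, and $\mu_k\ge\lambda$, subject to $\pi_0+1\le\bar E^{max}$. *)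

From Stdlib Require Import Reals Lra Lia ZArith.
Open Scope R_scope.

Definition enc_lam (lambda : R) (g : nat -> R) (k : nat) : R :=
  match k with
  | O => 2 * lambda * (1 - g O)
  | _ => lambda * (1 - g k)
  end.
Definition enc_mu (lambda : R) (f : nat -> R) (k : nat) : R := lambda + f k.

Fixpoint prodr (lam mu : nat -> R) (k : nat) : R :=
  match k with
  | O => 1
  | S m => prodr lam mu m * (lam m / mu (S m))
  end.

(* pi_0 = [1 + sum_{k=1}^K prod ...]^{-1}, written as sum from k=0 (prodr 0 = 1) *)
Definition pi0 (K : nat) (lam mu : nat -> R) : R :=
  / sum_f_R0 (prodr lam mu) K.

Definition pik (K : nat) (lam mu : nat -> R) (k : nat) : R :=
  pi0 K lam mu * prodr lam mu k.

Definition delay (lambda : R) (K : nat) (lam mu : nat -> R) : R :=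
  / (2 * lambda) * sum_f_R0 (fun k => INR k * pik K lam mu k) K.

Definition feasible (lambda Emax : R) (K : nat) (lam mu : nat -> R) : Prop :=
  0 <= lam O <= 2 * lambda /\
  (forall k, (1 <= k <= K - 1)%nat -> 0 <= lam k <= lambda) /\
  lam K = 0 /\
  (forall k, (1 <= k <= K)%nat -> lambda <= mu k) /\
  pi0 K lam mu + 1 <= Emax.

(* Write p_k = prod_{m<k} lam_m / mu_{m+1} for the unnormalised stationary
   profile, S = sum_k p_k = 1/pi_0 and W = sum_k k p_k, so that the delay is
   D = W / (2 lambda S).
   - Lower bound.  Feasibility gives p_0 = 1 and 0 <= p_k <= 2 for k >= 1.
     For any n <= K the terms (k - n) p_k are >= -n (k = 0), >= 2 (k - n)
     (0 < k < n) and >= 0 (k >= n); summing gives W - n S >= -n^2, hence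
     D >= (n - pi_0 n^2) / (2 lambda) >= (n - (Emax - 1) n^2) / (2 lambda).
   - Attainment.  The proposed chain has profile 1, 2, ..., 2, rho, 0, ...,
     so S = 1 + 2 k* + rho and W = k*(k*+1) + (k*+1) rho; with the floor
     bounds 0 <= rho < 2 this chain is feasible, pi_0 = Emax - 1, and its
     delay equals the lower bound for n = k* + 1. *)

From Stdlib Require Import Reals ZArith Lra Lia.
Open Scope R_scope.

Lemma sum_f_R0_shift (f p : nat -> R) (c : R) (m : nat) :
  sum_f_R0 (fun k => (f k - c) * p k) m =
  sum_f_R0 (fun k => f k * p k) m - c * sum_f_R0 p m.
Proof. induction m as [|m IH]; simpl; [ring | rewrite IH; ring]. Qed.

Lemma sum_f_R0_scale (f p : nat -> R) (a : R) (m : nat) :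
  sum_f_R0 (fun k => f k * (a * p k)) m = a * sum_f_R0 (fun k => f k * p k) m.
Proof. induction m as [|m IH]; simpl; [ring | rewrite IH; ring]. Qed.

Section BoundedProfile.
Variables (K n : nat) (p : nat -> R).
Hypothesis p_0 : p 0%nat = 1.
Hypothesis p_bounded : forall k, (1 <= k <= K)%nat -> 0 <= p k <= 2.

(* Below n every term (k - n) p_k is at least 2 (k - n), except k = 0. *)
Lemma centred_sum_below m : (m <= n)%nat -> (m <= K)%nat ->
  sum_f_R0 (fun k => (INR k - INR n) * p k) m >=
  - INR n + INR m * (INR m + 1) - 2 * INR n * INR m.
Proof.
  induction m as [|m IH]; intros Hmn HmK.
  - simpl. rewrite p_0. lra.
  - rewrite tech5. specialize (IH ltac:(lia) ltac:(lia)).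
    destruct (p_bounded (S m) ltac:(lia)) as [Hlo Hhi].
    assert (Hle : INR (S m) <= INR n) by (apply le_INR; lia).
    assert ((INR (S m) - INR n) * p (S m) >= 2 * (INR (S m) - INR n)) by nra.
    rewrite S_INR in *. nra.
Qed.

(* From n on the terms are nonnegative, so the value -n^2 at m = n persists. *)
Lemma centred_sum_lower m : (n <= m)%nat -> (m <= K)%nat ->
  sum_f_R0 (fun k => (INR k - INR n) * p k) m >= - INR n ^ 2.
Proof.
  induction m as [|m IH]; intros Hnm HmK.
  - replace n with 0%nat by lia. simpl. rewrite p_0. lra.
  - destruct (Nat.eq_dec n (S m)) as [Hn | Hn].
    + pose proof (centred_sum_below (S m) ltac:(lia) HmK) as Hbelow.
      rewrite Hn in Hbelow |- *. nra.
    + rewrite tech5. specialize (IH ltac:(lia) ltac:(lia)).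
      destruct (p_bounded (S m) ltac:(lia)) as [Hlo _].
      assert (INR n <= INR (S m)) by (apply le_INR; lia). nra.
Qed.

Lemma profile_sum_ge1 m : (m <= K)%nat -> sum_f_R0 p m >= 1.
Proof.
  induction m as [|m IH]; intros HmK; simpl.
  - rewrite p_0. lra.
  - specialize (IH ltac:(lia)). destruct (p_bounded (S m) ltac:(lia)). lra.
Qed.
End BoundedProfile.

Lemma ratio_bounds (a b c : R) : 0 < b -> 0 <= a <= c * b -> 0 <= a / b <= c.
Proof.
  intros Hb [Ha Hac]. unfold Rdiv. split.
  - apply Rmult_le_pos; [lra | left; apply Rinv_0_lt_compat; lra].
  - apply (Rmult_le_reg_r b); [lra|].
    rewrite Rmult_assoc, Rinv_l by lra. lra.
Qed.

(* Feasible rates have profile p_1 <= 2 and ratios lam_k / mu_{k+1} <= 1. *)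
Lemma feasible_profile_bounds (lambda Emax : R) (K : nat) (lam mu : nat -> R) :
  0 < lambda -> feasible lambda Emax K lam mu ->
  forall k, (1 <= k <= K)%nat -> 0 <= prodr lam mu k <= 2.
Proof.
  intros Hl [Hlam0 [Hlam [_ [Hmu _]]]] k.
  induction k as [|k IH]; intros Hk; [lia|].
  specialize (Hmu (S k) ltac:(lia)). cbn [prodr].
  destruct k as [|k].
  - assert (0 <= lam 0%nat / mu 1%nat <= 2) by (apply ratio_bounds; nra).
    simpl. lra.
  - specialize (IH ltac:(lia)).
    assert (0 <= lam (S k) / mu (S (S k)) <= 1).
    { apply ratio_bounds; [lra|]. specialize (Hlam (S k) ltac:(lia)). lra. }
    split; nra.
Qed.

Lemma feasible_delay_lower (lambda Emax : R) (K n : nat) (lam mu : nat -> R) :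
  0 < lambda -> feasible lambda Emax K lam mu -> (n <= K)%nat ->
  INR n / (2 * lambda) * (1 - (Emax - 1) * INR n) <= delay lambda K lam mu.
Proof.
  intros Hl Hf Hn.
  pose proof (feasible_profile_bounds _ _ _ _ _ Hl Hf) as Hp.
  assert (Hp0 : prodr lam mu 0 = 1) by reflexivity.
  pose proof (centred_sum_lower K n _ Hp0 Hp K Hn (le_n _)) as Hcentred.
  pose proof (profile_sum_ge1 K _ Hp0 Hp K (le_n _)) as HS1.
  rewrite sum_f_R0_shift in Hcentred.
  destruct Hf as [_ [_ [_ [_ Hpi0]]]].
  unfold delay, pik. rewrite sum_f_R0_scale.
  unfold pi0 in *.
  set (S := sum_f_R0 (prodr lam mu) K) in *.
  set (W := sum_f_R0 (fun k => INR k * prodr lam mu k) K) in *.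
  assert (HSinv : / S * S = 1) by (field; lra).
  assert (0 < / S) by (apply Rinv_0_lt_compat; lra).
  assert (Hmean : INR n - (Emax - 1) * INR n ^ 2 <= / S * W).
  { assert (0 <= INR n) by apply pos_INR. nra. }
  replace (INR n / (2 * lambda) * (1 - (Emax - 1) * INR n))
    with (/ (2 * lambda) * (INR n - (Emax - 1) * INR n ^ 2)) by (field; lra).
  apply Rmult_le_compat_l; [left; apply Rinv_0_lt_compat |]; lra.
Qed.

Section OptimalChain.
Variables (lambda rho : R) (ks : nat).
Hypothesis lambda_pos : 0 < lambda.
Hypothesis rho_pos : 0 < rho.

Definition lamC (k : nat) : R :=
  if (k =? 0)%nat then 2 * lambda else if (k <=? ks)%nat then lambda else 0.
Definition muC (k : nat) : R :=
  if (k =? ks + 1)%nat then 2 * lambda / rho else lambda.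
Definition gC (k : nat) : R := if (k <=? ks)%nat then 0 else 1.
Definition fC (k : nat) : R :=
  if (k =? ks + 1)%nat then 2 * lambda / rho - lambda else 0.
Definition profileC (k : nat) : R :=
  if (k =? 0)%nat then 1 else if (k <=? ks)%nat then 2
  else if (k =? ks + 1)%nat then rho else 0.

Ltac nat_cases := repeat match goal with
  | |- context [(?a =? ?b)%nat] => destruct (Nat.eqb_spec a b)
  | |- context [(?a <=? ?b)%nat] => destruct (Nat.leb_spec a b) end.

Lemma chain_enc_rates k :
  enc_lam lambda gC k = lamC k /\ enc_mu lambda fC k = muC k.
Proof.
  unfold enc_lam, enc_mu, lamC, muC, gC, fC.
  destruct k as [|k]; nat_cases; split; ring || lia.
Qed.

Lemma chain_prodr k : prodr lamC muC k = profileC k.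
Proof.
  induction k as [|k IH]; [reflexivity|].
  cbn [prodr]. rewrite IH.
  unfold lamC, muC, profileC. nat_cases; try lia; field; lra.
Qed.

Lemma profileC_sum m : sum_f_R0 profileC m =
  if (m <=? ks)%nat then 1 + 2 * INR m else 1 + 2 * INR ks + rho.
Proof.
  induction m as [|m IH].
  - simpl. unfold profileC. nat_cases; try lia; simpl; lra.
  - rewrite tech5, IH, S_INR. unfold profileC. nat_cases; try lia; try lra.
    replace m with ks by lia. lra.
Qed.

Lemma profileC_weighted_sum m : sum_f_R0 (fun k => INR k * profileC k) m =
  if (m <=? ks)%nat then INR m * (INR m + 1)
  else INR ks * (INR ks + 1) + (INR ks + 1) * rho.
Proof.
  induction m as [|m IH].
  - simpl. unfold profileC. nat_cases; try lia; simpl; lra.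
  - rewrite tech5, IH, S_INR. unfold profileC. nat_cases; try lia; try lra.
    replace m with ks by lia. lra.
Qed.

Lemma chain_mu_ge : rho <= 2 -> lambda <= 2 * lambda / rho.
Proof.
  intros Hrho. apply (Rmult_le_reg_r rho); [lra|]. unfold Rdiv.
  rewrite Rmult_assoc, Rinv_l by lra. nra.
Qed.

(* Truncation at K >= k* + 1 keeps the whole support of the profile. *)
Section Truncated.
Variable K : nat.
Hypothesis ks_lt_K : (ks + 1 <= K)%nat.

Lemma chain_pi0 : pi0 K lamC muC = / (1 + 2 * INR ks + rho).
Proof.
  unfold pi0. rewrite (sum_eq _ profileC K) by (intros; apply chain_prodr).
  rewrite profileC_sum. destruct (Nat.leb_spec K ks); [lia | reflexivity].
Qed.

Lemma chain_delay :
  delay lambda K lamC muC =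
  (INR ks + 1) / (2 * lambda) * (1 - pi0 K lamC muC * (INR ks + 1)).
Proof.
  unfold delay, pik. rewrite sum_f_R0_scale, chain_pi0.
  rewrite (sum_eq _ (fun k => INR k * profileC k) K)
    by (intros; rewrite chain_prodr; reflexivity).
  rewrite profileC_weighted_sum. destruct (Nat.leb_spec K ks); [lia|].
  assert (0 <= INR ks) by apply pos_INR.
  field. lra.
Qed.

Lemma chain_feasible (Emax : R) :
  rho <= 2 -> pi0 K lamC muC + 1 <= Emax -> feasible lambda Emax K lamC muC.
Proof.
  intros Hrho HE.
  pose proof (chain_mu_ge Hrho) as Hmu.
  split; [|split; [|split; [|split]]]; [unfold lamC .. | unfold muC | exact HE].
  - nat_cases; lia || lra.
  - intros k Hk. nat_cases; lia || lra.
  - nat_cases; lia || reflexivity.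
  - intros k Hk. nat_cases; lra.
Qed.
End Truncated.
End OptimalChain.

Lemma floor_remainder_bounds (pi : R) : 0 < pi <= 1 ->
  let ks := Z.to_nat (Int_part ((1 / pi - 1) / 2)) in
  0 <= 1 / pi - 1 - 2 * INR ks < 2.
Proof.
  intros [Hpos Hle1] ks.
  set (x := (1 / pi - 1) / 2) in *.
  assert (Hx0 : 0 <= x).
  { assert (1 <= 1 / pi) by (apply (Rmult_le_reg_r pi); [lra|]; field_simplify; lra).
    unfold x. lra. }
  destruct (base_Int_part x) as [Hfl Hfl1].
  assert (Hz : (0 <= Int_part x)%Z).
  { assert (-1 < Int_part x)%Z by (apply lt_IZR; lra). lia. }
  assert (Hks : INR ks = IZR (Int_part x)).
  { unfold ks. rewrite INR_IZR_INZ, Z2Nat.id by exact Hz. reflexivity. }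
  unfold x in *. lra.
Qed.

Theorem mainTheorem5 (lambda Emax : R) (K : nat) :
  0 < lambda -> (1 <= K)%nat ->
  1 + 1 / (1 + 2 * INR K) <= Emax -> Emax <= 2 ->
  let pi0s := Emax - 1 in
  let ks : nat := Z.to_nat (Int_part ((1 / pi0s - 1) / 2)) in
  let rho := 1 / pi0s - 1 - 2 * INR ks in
  (ks + 1 <= K)%nat -> 0 < rho ->
  let lamS : nat -> R := fun k =>
    if (k =? 0)%nat then 2 * lambda
    else if (k <=? ks)%nat then lambda else 0 in
  let muS : nat -> R := fun k =>
    if (k =? ks + 1)%nat then 2 * lambda / rho else lambda in
  let gS : nat -> R := fun k => if (k <=? ks)%nat then 0 else 1 in
  let fS : nat -> R := fun k =>
    if (k =? ks + 1)%nat then 2 * lambda / rho - lambda else 0 in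
  (forall k, (k <= K)%nat ->
     enc_lam lambda gS k = lamS k /\ ((1 <= k)%nat -> enc_mu lambda fS k = muS k)) /\
  (forall k, (k <= K)%nat -> 0 <= gS k <= 1) /\
  (forall k, (1 <= k <= K)%nat -> 0 <= fS k) /\
  feasible lambda Emax K lamS muS /\
  pi0 K lamS muS = pi0s /\
  delay lambda K lamS muS =
    (INR ks + 1) / (2 * lambda) * (1 - (Emax - 1) * (INR ks + 1)) /\
  (forall lam mu : nat -> R, feasible lambda Emax K lam mu ->
     delay lambda K lamS muS <= delay lambda K lam mu).
Proof.
  intros Hl HK HE1 HE2 pi0s ks rho Hks Hrho lamS muS gS fS.
  assert (HlamS : lamS = lamC lambda ks) by reflexivity.
  assert (HmuS : muS = muC lambda rho ks) by reflexivity.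
  assert (HgS : gS = gC ks) by reflexivity.
  assert (HfS : fS = fC lambda rho ks) by reflexivity.
  clearbody lamS muS gS fS; subst lamS muS gS fS.
  assert (Hpi0s : 0 < pi0s <= 1).
  { assert (0 < 1 / (1 + 2 * INR K)) by (pose proof (pos_INR K);
      apply Rdiv_lt_0_compat; lra). unfold pi0s. lra. }
  assert (Hrho2 : 0 <= rho < 2) by exact (floor_remainder_bounds pi0s Hpi0s).
  assert (Hpi0 : pi0 K (lamC lambda ks) (muC lambda rho ks) = pi0s).
  { rewrite (chain_pi0 lambda rho ks Hl Hrho K Hks).
    unfold rho. field_simplify; [field |]; lra. }
  assert (Hdelay : delay lambda K (lamC lambda ks) (muC lambda rho ks) =
      (INR ks + 1) / (2 * lambda) * (1 - (Emax - 1) * (INR ks + 1))).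
  { rewrite (chain_delay lambda rho ks Hl Hrho K Hks), Hpi0. reflexivity. }
  split; [|split; [|split; [|split; [|split; [|split]]]]].
  - intros k _. split; [|intros _]; apply (chain_enc_rates lambda rho ks).
  - intros k _. unfold gC. destruct (Nat.leb_spec k ks); lra.
  - intros k _. unfold fC. destruct (Nat.eqb_spec k (ks + 1)); [|lra].
    assert (lambda <= 2 * lambda / rho) by (apply chain_mu_ge; lra). lra.
  - apply (chain_feasible lambda rho ks Hl Hrho K); [exact Hks | lra |].
    rewrite Hpi0. unfold pi0s. lra.
  - exact Hpi0.
  - exact Hdelay.
  - intros lam mu Hf. rewrite Hdelay.
    pose proof (feasible_delay_lower lambda Emax K (ks + 1) lam mu Hl Hf Hks) as Hlow.
    rewrite plus_INR in Hlow. exact Hlow.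
Qed.
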